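(* For real hopping amplitudes $s,t$ with $|s|\neq |t|$, and arbitrary real interface hopping amplitudes $u_L,u_R$, the SSH interface Hamiltonian $H_{\rm SSH}$ has a bulk spectral gap (around $0$) and an odd number of zero modes, i.e. $\dim\ker H_{\rm SSH}$ is odd.
   Context: Pauli matrices $\sigma_1=\begin{pmatrix}0&1\\1&0\end{pmatrix}$, $\sigma_3=\begin{pmatrix}1&0\\0&-1\end{pmatrix}$. Consider the Hilbert space $\ell^2(-\mathbf{N};\mathbf{C}^2)\oplus\mathbf{C}\oplus\ell^2(\mathbf{N};\mathbf{C}^2)$, with sequences $\psi=(\psi_n)$, $\psi_n\in\mathbf{C}^2$ for $n\neq 0$ and $\psi_0\in\mathbf{C}$. The interface Hamiltonian $H_{\rm int}(A_L,V_L,A_R,V_R;B_L,B_R,W)$ acts as $(H_{\rm int}\psi)_n=A_R^*\psi_{n-1}+A_R\psi_{n+1}+V_R\psi_n$ for $n\geq 2$; $=B_R^*\psi_0+A_R\psi_2+V_R\psi_1$ for $n=1$; $=B_L^*\psi_{-1}+B_R\psi_1+W\psi_0$ for $n=0$; $=A_L^*\psi_{-2}+B_L\psi_0+V_L\psi_{-1}$ for $n=-1$; $=A_L^*\psi_{n-1}+A_L\psi_{n+1}+V_L\psi_n$ for $n\leq -2$, where $A_L,A_R,V_L,V_R$ are $2\times2$ matrices, $B_L^*,B_R$ are $1\times 2$ matrices and $W\in\mathbf{R}$. The SSH model Hamiltonian is $H_{\rm SSH}=H_{\rm int}(A,V,A,V;B_L,B_R,0)$ with $V=s\sigma_1$,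 $A=\begin{pmatrix}0&0\\t&0\end{pmatrix}$, $B_R=(u_R\;\;0)$, $B_L^*=(0\;\;u_L)$, $s,t,u_L,u_R\in\mathbf{R}$. It is chiral symmetric with respect to a sublattice grading (on each side the two components of $\mathbf{C}^2$ are the two sublattices, arranged so that the left side is the mirror image of the right, and the $n=0$ site belongs to one sublattice), i.e. $H_{\rm SSH}$ anticommutes with this grading. *)

From Stdlib Require Import Reals ZArith Arith.
From Coquelicot Require Import Coquelicot.

Open Scope R_scope.

Definition C2 : Type := (C * C)%type.
Definition C2zero : C2 := (RtoC 0, RtoC 0).
Definition C2add (x y : C2) : C2 := (Cplus (fst x) (fst y), Cplus (snd x) (snd y)).
Definition C2scal (a : C) (x : C2) : C2 := (Cmult a (fst x), Cmult a (snd x)).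
Definition C2norm2 (x : C2) : R := (Cmod (fst x))^2 + (Cmod (snd x))^2.

Record M2 : Type := mkM2 { m11 : C; m12 : C; m21 : C; m22 : C }.
Definition mv (M : M2) (x : C2) : C2 :=
  (Cplus (Cmult (m11 M) (fst x)) (Cmult (m12 M) (snd x)),
   Cplus (Cmult (m21 M) (fst x)) (Cmult (m22 M) (snd x))).
Definition madj (M : M2) : M2 :=
  mkM2 (Cconj (m11 M)) (Cconj (m21 M)) (Cconj (m12 M)) (Cconj (m22 M)).

(** A 1x2 matrix (row) r = (r1 r2): acts C^2 -> C;
    its adjoint r^* is a 2x1 matrix acting C -> C^2. *)
Definition row_act (r : C2) (x : C2) : C :=
  Cplus (Cmult (fst r) (fst x)) (Cmult (snd r) (snd x)).
Definition row_adj_act (r : C2) (c : C) : C2 :=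
  (Cmult (Cconj (fst r)) c, Cmult (Cconj (snd r)) c).

Definition sigma1 : M2 := mkM2 (RtoC 0) (RtoC 1) (RtoC 1) (RtoC 0).
Definition sigma3 : M2 := mkM2 (RtoC 1) (RtoC 0) (RtoC 0) (RtoC (-1)).
Definition rscal (s : R) (M : M2) : M2 :=
  mkM2 (Cmult (RtoC s) (m11 M)) (Cmult (RtoC s) (m12 M))
       (Cmult (RtoC s) (m21 M)) (Cmult (RtoC s) (m22 M)).
Definition V_SSH (s : R) : M2 := rscal s sigma1.
Definition A_SSH (t : R) : M2 := mkM2 (RtoC 0) (RtoC 0) (RtoC t) (RtoC 0).

(** A state is stored as three pieces:
      psiL k = psi_{-(k+1)}  (k : nat, so n = -1, -2, ...)
      psi0   = psi_0 in C
      psiR k = psi_{k+1}     (k : nat, so n = 1, 2, ...). *)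
Record St : Type := mkSt { psiL : nat -> C2; psi0 : C; psiR : nat -> C2 }.

Definition is_l2_nat (f : nat -> C2) : Prop := ex_series (fun k => C2norm2 (f k)).
Definition in_Hint (psi : St) : Prop := is_l2_nat (psiL psi) /\ is_l2_nat (psiR psi).

Definition St_zero : St := mkSt (fun _ => C2zero) (RtoC 0) (fun _ => C2zero).
Definition St_add (x y : St) : St :=
  mkSt (fun k => C2add (psiL x k) (psiL y k)) (Cplus (psi0 x) (psi0 y))
       (fun k => C2add (psiR x k) (psiR y k)).
Definition St_scal (a : C) (x : St) : St :=
  mkSt (fun k => C2scal a (psiL x k)) (Cmult a (psi0 x)) (fun k => C2scal a (psiR x k)).
Fixpoint St_lincomb (d : nat) (c : nat -> C) (b : nat -> St) : St :=
  match d with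
  | O => St_zero
  | S d' => St_add (St_lincomb d' c b) (St_scal (c d') (b d'))
  end.

(** * The interface Hamiltonian H_int(A_L,V_L,A_R,V_R;B_L,B_R,W).
    [BR] is the row B_R, [BLs] is the row B_L^*. *)
Definition H_int (AL VL AR VR : M2) (BLs BR : C2) (W : R) (psi : St) : St :=
  mkSt
    (* n = -(k+1) *)
    (fun k => match k with
              | O => (* n = -1 *)
                  C2add (C2add (mv (madj AL) (psiL psi 1))
                               (row_adj_act BLs (psi0 psi)))
                        (mv VL (psiL psi 0))
              | S k' => (* n = -(k'+2) <= -2 *)
                  C2add (C2add (mv (madj AL) (psiL psi (S k)))
                               (mv AL (psiL psi k')))
                        (mv VL (psiL psi k))
              end)
    (* n = 0 *)
    (Cplus (Cplus (row_act BLs (psiL psi 0)) (row_act BR (psiR psi 0)))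
           (Cmult (RtoC W) (psi0 psi)))
    (* n = k+1 *)
    (fun k => match k with
              | O => (* n = 1 *)
                  C2add (C2add (row_adj_act BR (psi0 psi)) (mv AR (psiR psi 1)))
                        (mv VR (psiR psi 0))
              | S k' => (* n = k'+2 >= 2 *)
                  C2add (C2add (mv (madj AR) (psiR psi k')) (mv AR (psiR psi (S k))))
                        (mv VR (psiR psi k))
              end).

Definition H_SSH (s t uL uR : R) : St -> St :=
  H_int (A_SSH t) (V_SSH s) (A_SSH t) (V_SSH s)
        (RtoC 0, RtoC uL) (RtoC uR, RtoC 0) 0.

Definition in_ker (H : St -> St) (psi : St) : Prop := in_Hint psi /\ H psi = St_zero.

Definition ker_dim (H : St -> St) (d : nat) : Prop :=
  exists b : nat -> St,
    (forall i, (i < d)%nat -> in_ker H (b i)) /\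
    (forall c : nat -> C, St_lincomb d c b = St_zero -> forall i, (i < d)%nat -> c i = RtoC 0) /\
    (forall psi, in_ker H psi -> exists c : nat -> C, psi = St_lincomb d c b).

Definition H_bulk (A V : M2) (psi : Z -> C2) : Z -> C2 :=
  fun n => C2add (C2add (mv (madj A) (psi (n - 1)%Z)) (mv A (psi (n + 1)%Z))) (mv V (psi n)).

Definition is_l2_Z (f : Z -> C2) : Prop :=
  ex_series (fun k => C2norm2 (f (Z.of_nat k))) /\
  ex_series (fun k => C2norm2 (f (- Z.of_nat (S k))%Z)).
Definition norm2_Z (f : Z -> C2) : R :=
  Series (fun k => C2norm2 (f (Z.of_nat k))) + Series (fun k => C2norm2 (f (- Z.of_nat (S k))%Z)).

Definition in_resolvent_Z (H : (Z -> C2) -> (Z -> C2)) (lam : C) : Prop :=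
  exists G : (Z -> C2) -> (Z -> C2),
    (forall phi, is_l2_Z phi -> is_l2_Z (G phi)) /\
    (forall phi, is_l2_Z phi ->
       (fun n => C2add (H (G phi) n) (C2scal (Copp lam) (G phi n))) = phi) /\
    (forall psi, is_l2_Z psi ->
       G (fun n => C2add (H psi n) (C2scal (Copp lam) (psi n))) = psi) /\
    (exists K : R, forall phi, is_l2_Z phi -> norm2_Z (G phi) <= K * norm2_Z phi).

Definition in_spectrum_Z (H : (Z -> C2) -> (Z -> C2)) (lam : C) : Prop :=
  ~ in_resolvent_Z H lam.

Definition spectral_gap_at_0 (H : (Z -> C2) -> (Z -> C2)) : Prop :=
  exists delta : R, 0 < delta /\
    forall lam : R, Rabs lam < delta -> ~ in_spectrum_Z H (RtoC lam).

From Stdlib Require Import Reals ZArith Lra Lia Psatz FunctionalExtensionality.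
From Coquelicot Require Import Coquelicot.

Open Scope R_scope.

(* The bulk Hamiltonian has real coefficients and couples the two sublattices only through
   the blocks y |-> t y(n-1) + s y(n) and x |-> t x(n+1) + s x(n).  Hence (H - lam)(H + lam)
   acts on each sublattice, and on real and imaginary parts separately, as the Laurent
   operator (s^2 + t^2 - lam^2) + s t (S + S^-1).  For |lam| < ||s| - |t|| its symbol factors
   as c (1 - al z) (1 - al / z) with |al| < 1, so it is inverted by convolution with the
   summable kernel al^|n| / (c (1 - al^2)); composing with H + lam gives a bounded inverse
   of H - lam on l^2.

   A zero mode satisfies first-order recursions on each sublattice of each half-line.  On
   one sublattice the solution cannot decay, so square-summability kills it; on the other
   it decays geometrically with ratio -t/s or -s/t.  For |t| < |s| everything is fixed by
   the centre amplitude psi_0: one zero mode.  For |s| < |t| the free data are psi_0 and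
   the amplitudes b_(-1), a_1 next to the centre, subject to u_L psi_0 = u_R psi_0 = 0 and
   u_L b_(-1) + u_R a_1 = 0: three zero modes if u_L = u_R = 0, and one otherwise. *)

(** * Square-summable real sequences on Z *)

Fixpoint fsum (h : nat -> R) (L : nat) : R :=
  match L with O => 0 | S L' => fsum h L' + h L' end.

Lemma fsum_ext h g L : (forall i, (i < L)%nat -> h i = g i) -> fsum h L = fsum g L.
Proof.
  induction L as [|L IH]; intros E; simpl; [reflexivity|].
  rewrite IH, E; [reflexivity | lia | intros; apply E; lia].
Qed.

Lemma fsum_nonneg h L : (forall i, 0 <= h i) -> 0 <= fsum h L.
Proof. intros H; induction L; simpl; [lra|]. specialize (H L); lra. Qed.

Lemma fsum_le h g L : (forall i, h i <= g i) -> fsum h L <= fsum g L.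
Proof. intros H; induction L; simpl; [lra|]. specialize (H L); lra. Qed.

Lemma fsum_plus h g L : fsum (fun i => h i + g i) L = fsum h L + fsum g L.
Proof. induction L; simpl; lra. Qed.

Lemma fsum_scal_l c h L : fsum (fun i => c * h i) L = c * fsum h L.
Proof. induction L as [|L IH]; simpl; [ring|]. rewrite IH; ring. Qed.

Lemma sum_n_fsum a n : sum_n a n = fsum a (S n).
Proof.
  induction n as [|n IH]; [rewrite sum_O; simpl; rewrite Rplus_0_l; reflexivity|].
  rewrite sum_Sn, IH. simpl. reflexivity.
Qed.

Lemma fsum_le_Series a : (forall k, 0 <= a k) -> ex_series a -> forall n, fsum a n <= Series a.
Proof.
  intros Ha He n.
  apply Rle_trans with (fsum a (S n)); [simpl; specialize (Ha n); lra|].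
  rewrite <- sum_n_fsum. apply is_lim_seq_incr_compare; [exact (Series_correct a He)|].
  intros m; rewrite !sum_n_fsum; simpl; specialize (Ha (S m)); lra.
Qed.

Lemma ex_series_of_fsum_bound a M : (forall k, 0 <= a k) -> (forall n, fsum a n <= M) ->
  ex_series a /\ Series a <= M.
Proof.
  intros Ha Hb.
  destruct (ex_finite_lim_seq_incr (sum_n a) M) as [l Hl].
  - intros n; rewrite !sum_n_fsum; simpl; specialize (Ha (S n)); lra.
  - intros n; rewrite sum_n_fsum; apply Hb.
  - assert (He : ex_series a) by (exists l; exact Hl). split; [exact He|].
    apply (is_lim_seq_le (sum_n a) (fun _ => M) (Series a) M);
      [intros n; rewrite sum_n_fsum; apply Hb | exact (Series_correct a He) | apply is_lim_seq_const].
Qed.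

Lemma ex_series_nonneg_le (a b : nat -> R) : (forall k, 0 <= a k <= b k) -> ex_series b -> ex_series a.
Proof.
  intros H. apply (ex_series_le a b). intros k. change norm with Rabs. rewrite Rabs_pos_eq; apply H.
Qed.

Lemma is_series_zero : is_series (fun _ : nat => 0) 0.
Proof.
  apply (filterlim_ext (fun _ => 0)); [|apply filterlim_const].
  intros n; rewrite sum_n_const; ring.
Qed.

Lemma is_series_fsum (F : nat -> nat -> R) L : (forall i, ex_series (F i)) ->
  is_series (fun k => fsum (fun i => F i k) L) (fsum (fun i => Series (F i)) L).
Proof.
  intros HF; induction L as [|L IH]; simpl; [exact is_series_zero|].
  apply (is_series_plus (fun k => fsum (fun i => F i k) L) (F L));
    [exact IH | exact (Series_correct _ (HF L))].
Qed.

(* Norm bounds go through finite windows: a uniform bound on the windows of [f^2] bounds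
   [sqnorm f], and the family of all windows is invariant under shifts. *)
Definition window (h : Z -> R) (a : Z) (L : nat) : R := fsum (fun i => h (a + Z.of_nat i)%Z) L.

Lemma window_split h a p q : window h a (p + q) = window h a p + window h (a + Z.of_nat p)%Z q.
Proof.
  unfold window. induction q as [|q IH]; simpl; [rewrite Nat.add_0_r; ring|].
  rewrite Nat.add_succ_r; simpl. rewrite IH.
  replace (a + Z.of_nat (p + q))%Z with (a + Z.of_nat p + Z.of_nat q)%Z by lia. ring.
Qed.

Lemma window_mono h a L b L' : (forall n, 0 <= h n) ->
  (b <= a)%Z -> (a + Z.of_nat L <= b + Z.of_nat L')%Z -> window h a L <= window h b L'.
Proof.
  intros Hh H1 H2.
  set (p := Z.to_nat (a - b)). set (r := (L' - p - L)%nat).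
  replace L' with (p + (L + r))%nat by (unfold r, p; lia).
  rewrite !window_split. replace (b + Z.of_nat p)%Z with a by (unfold p; lia).
  assert (0 <= window h b p) by (apply fsum_nonneg; auto).
  assert (0 <= window h (a + Z.of_nat L) r) by (apply fsum_nonneg; auto).
  lra.
Qed.

Lemma window_centered h M : window h (- Z.of_nat M) (2 * M) =
  fsum (fun k => h (Z.of_nat k)) M + fsum (fun k => h (- Z.of_nat (S k))%Z) M.
Proof.
  induction M as [|M IH]; [unfold window; simpl; ring|].
  replace (2 * S M)%nat with (1 + (2 * M + 1))%nat by lia.
  rewrite !window_split.
  replace (- Z.of_nat (S M) + Z.of_nat 1)%Z with (- Z.of_nat M)%Z by lia.
  rewrite IH. unfold window; simpl.
  replace (- Z.of_nat (S M) + 0)%Z with (- Z.of_nat (S M))%Z by lia.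
  replace (- Z.of_nat M + Z.of_nat (M + (M + 0)) + 0)%Z with (Z.of_nat M) by lia. ring.
Qed.

Definition l2 (f : Z -> R) : Prop :=
  ex_series (fun k => f (Z.of_nat k) ^ 2) /\ ex_series (fun k => f (- Z.of_nat (S k))%Z ^ 2).

Definition sqnorm (f : Z -> R) : R :=
  Series (fun k => f (Z.of_nat k) ^ 2) + Series (fun k => f (- Z.of_nat (S k))%Z ^ 2).

Lemma window_le_sqnorm f : l2 f -> forall a L, window (fun n => f n ^ 2) a L <= sqnorm f.
Proof.
  intros [H1 H2] a L.
  set (M := (Z.to_nat (Z.abs a) + L)%nat).
  apply Rle_trans with (window (fun n => f n ^ 2) (- Z.of_nat M) (2 * M)).
  { apply window_mono; [intros; nra | unfold M; lia | unfold M; lia]. }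
  rewrite window_centered. unfold sqnorm.
  pose proof (fsum_le_Series _ (fun k => pow2_ge_0 (f (Z.of_nat k))) H1 M).
  pose proof (fsum_le_Series _ (fun k => pow2_ge_0 (f (- Z.of_nat (S k))%Z)) H2 M).
  lra.
Qed.

Lemma l2_of_window_bound f B : (forall a L, window (fun n => f n ^ 2) a L <= B) ->
  l2 f /\ sqnorm f <= B.
Proof.
  intros Hb.
  set (u := fun k => f (Z.of_nat k) ^ 2). set (v := fun k => f (- Z.of_nat (S k))%Z ^ 2).
  assert (Hu : forall k, 0 <= u k) by (intros; apply pow2_ge_0).
  assert (Hv : forall k, 0 <= v k) by (intros; apply pow2_ge_0).
  assert (Hs : forall M, fsum u M + fsum v M <= B).
  { intros M; unfold u, v. rewrite <- (window_centered (fun n => f n ^ 2)). apply Hb. }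
  destruct (ex_series_of_fsum_bound u B Hu) as [Eu _].
  { intros n; pose proof (fsum_nonneg v n Hv); specialize (Hs n); lra. }
  destruct (ex_series_of_fsum_bound v B Hv) as [Ev _].
  { intros n; pose proof (fsum_nonneg u n Hu); specialize (Hs n); lra. }
  split; [split; assumption|].
  apply (is_lim_seq_le (fun n => sum_n u n + sum_n v n) (fun _ => B) (Series u + Series v) B).
  - intros n; rewrite !sum_n_fsum; apply Hs.
  - apply (is_lim_seq_plus' _ _ _ _ (Series_correct u Eu) (Series_correct v Ev)).
  - apply is_lim_seq_const.
Qed.

Lemma sqnorm_nonneg f : l2 f -> 0 <= sqnorm f.
Proof. intros H; exact (window_le_sqnorm f H 0%Z 0). Qed.

Definition bounded_seq (f : Z -> R) : Prop := exists M, forall n, Rabs (f n) <= M.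

Lemma bounded_of_l2 f : l2 f -> bounded_seq f.
Proof.
  intros H. exists (1 + sqnorm f). intros n.
  pose proof (window_le_sqnorm f H n 1) as Hn. unfold window in Hn; simpl in Hn.
  rewrite Z.add_0_r in Hn. pose proof (sqnorm_nonneg f H).
  unfold Rabs; destruct Rcase_abs; nra.
Qed.

Lemma l2_lincomb f g a b : l2 f -> l2 g ->
  l2 (fun n => a * f n + b * g n) /\
  sqnorm (fun n => a * f n + b * g n) <= 2 * a ^ 2 * sqnorm f + 2 * b ^ 2 * sqnorm g.
Proof.
  intros Hf Hg. apply l2_of_window_bound. intros x L.
  apply Rle_trans with
    (2 * a ^ 2 * window (fun n => f n ^ 2) x L + 2 * b ^ 2 * window (fun n => g n ^ 2) x L).
  { unfold window. rewrite <- !fsum_scal_l, <- fsum_plus. apply fsum_le. intros i.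
    set (u := f _); set (v := g _). pose proof (pow2_ge_0 (a * u - b * v)). nra. }
  pose proof (window_le_sqnorm f Hf x L); pose proof (window_le_sqnorm g Hg x L).
  pose proof (pow2_ge_0 a); pose proof (pow2_ge_0 b). nra.
Qed.

Lemma l2_shift f d : l2 f -> l2 (fun n => f (n + d)%Z) /\ sqnorm (fun n => f (n + d)%Z) <= sqnorm f.
Proof.
  intros Hf; apply l2_of_window_bound; intros a L.
  replace (window (fun n => f (n + d)%Z ^ 2) a L) with (window (fun n => f n ^ 2) (a + d) L);
    [apply window_le_sqnorm, Hf|].
  unfold window; apply fsum_ext; intros; do 2 f_equal; lia.
Qed.

Lemma cauchy_schwarz_step A B C p x : B ^ 2 <= A * C -> 0 <= A -> 0 <= C ->
  (B + p * x) ^ 2 <= (A + Rabs p) * (C + Rabs p * x ^ 2).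
Proof.
  intros HB HA HC.
  assert (Hsq : Rabs p ^ 2 = p ^ 2) by (unfold Rabs; destruct Rcase_abs; ring).
  assert (H2 : 2 * (B * x) <= A * x ^ 2 + C).
  { destruct (Req_dec A 0) as [->|HA0]; [assert (B = 0) by nra; subst; nra|].
    pose proof (pow2_ge_0 (A * x - B)). assert (0 < A) by lra. nra. }
  assert (H2' : - (2 * (B * x)) <= A * x ^ 2 + C).
  { destruct (Req_dec A 0) as [->|HA0]; [assert (B = 0) by nra; subst; nra|].
    pose proof (pow2_ge_0 (A * x + B)). assert (0 < A) by lra. nra. }
  assert (2 * B * p * x <= Rabs p * (A * x ^ 2 + C)).
  { unfold Rabs; destruct Rcase_abs; nra. }
  nra.
Qed.

Lemma fsum_cauchy_schwarz p x L :
  fsum (fun k => p k * x k) L ^ 2 <=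
  fsum (fun k => Rabs (p k)) L * fsum (fun k => Rabs (p k) * x k ^ 2) L.
Proof.
  induction L as [|L IH]; simpl; [lra|].
  apply cauchy_schwarz_step; [exact IH | apply fsum_nonneg; intros; apply Rabs_pos |].
  apply fsum_nonneg; intros i. pose proof (Rabs_pos (p i)); pose proof (pow2_ge_0 (x i)); nra.
Qed.

(** * Geometric convolutions and the Green function of a Laurent operator *)

Definition geom_conv (al : R) (d : Z) (f : Z -> R) (n : Z) : R :=
  Series (fun k => al ^ k * f (n + d * Z.of_nat k)%Z).

Section GeomConv.

Variables (al : R) (d : Z).
Hypothesis Hal : Rabs al < 1.

Lemma ex_series_geom_abs : ex_series (fun k => Rabs al ^ k).
Proof. apply ex_series_geom. rewrite Rabs_Rabsolu. exact Hal. Qed.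

Lemma ex_series_geom_conv f n : bounded_seq f -> ex_series (fun k => al ^ k * f (n + d * Z.of_nat k)%Z).
Proof.
  intros [M HM]. apply (@ex_series_le R_AbsRing R_CompleteNormedModule _ (fun k => M * Rabs al ^ k)).
  - intros k. change norm with Rabs. rewrite Rabs_mult, <- RPow_abs.
    pose proof (pow_le (Rabs al) k (Rabs_pos al)). specialize (HM (n + d * Z.of_nat k)%Z). nra.
  - apply (ex_series_scal_l M (fun k => Rabs al ^ k)), ex_series_geom_abs.
Qed.

Lemma geom_conv_step f n : bounded_seq f -> geom_conv al d f n = f n + al * geom_conv al d f (n + d)%Z.
Proof.
  intros Hf. unfold geom_conv. rewrite Series_incr_1 by (apply ex_series_geom_conv, Hf).
  rewrite <- Series_scal_l. f_equal.
  - replace (n + d * Z.of_nat 0)%Z with n by lia. simpl; ring.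
  - apply Series_ext; intros k.
    replace (n + d * Z.of_nat (S k))%Z with (n + d + d * Z.of_nat k)%Z by lia. simpl; ring.
Qed.

Lemma geom_conv_lincomb f g a b n : bounded_seq f -> bounded_seq g ->
  geom_conv al d (fun m => a * f m + b * g m) n = a * geom_conv al d f n + b * geom_conv al d g n.
Proof.
  intros Hf Hg. unfold geom_conv. rewrite <- !Series_scal_l, <- Series_plus.
  - apply Series_ext; intros; ring.
  - apply (ex_series_scal_l a (fun k => al ^ k * f (n + d * Z.of_nat k)%Z)), ex_series_geom_conv, Hf.
  - apply (ex_series_scal_l b (fun k => al ^ k * g (n + d * Z.of_nat k)%Z)), ex_series_geom_conv, Hg.
Qed.

Lemma geom_conv_shift f e n : geom_conv al d (fun m => f (m + e)%Z) n = geom_conv al d f (n + e)%Z.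
Proof. unfold geom_conv; apply Series_ext; intros; do 2 f_equal; lia. Qed.

(* Cauchy-Schwarz with the weights |al|^k, whose total mass is 1 / (1 - |al|). *)
Lemma sq_geom_conv_le f n : bounded_seq f ->
  ex_series (fun k => Rabs al ^ k * f (n + d * Z.of_nat k)%Z ^ 2) /\
  geom_conv al d f n ^ 2 <= / (1 - Rabs al) * Series (fun k => Rabs al ^ k * f (n + d * Z.of_nat k)%Z ^ 2).
Proof.
  intros Hf. set (x := fun k => f (n + d * Z.of_nat k)%Z).
  assert (Hw : forall k, 0 <= Rabs al ^ k) by (intros; apply pow_le, Rabs_pos).
  assert (Hwx : forall k, 0 <= Rabs al ^ k * x k ^ 2)
    by (intros k; pose proof (Hw k); pose proof (pow2_ge_0 (x k)); nra).
  assert (Ex : ex_series (fun k => Rabs al ^ k * x k ^ 2)).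
  { destruct Hf as [M HM]. apply (ex_series_nonneg_le _ (fun k => M ^ 2 * Rabs al ^ k)).
    - intros k. split; [apply Hwx|].
      assert (x k ^ 2 <= M ^ 2).
      { specialize (HM (n + d * Z.of_nat k)%Z). fold (x k) in HM.
        pose proof (Rabs_pos (x k)). rewrite <- (pow2_abs (x k)). nra. }
      pose proof (Hw k). nra.
    - apply (ex_series_scal_l (M ^ 2) (fun k => Rabs al ^ k)), ex_series_geom_abs. }
  split; [exact Ex|].
  assert (Hmass : Series (fun k => Rabs al ^ k) = / (1 - Rabs al)).
  { apply Series_geom. rewrite Rabs_Rabsolu; exact Hal. }
  apply (is_lim_seq_le (fun m => sum_n (fun k => al ^ k * x k) m ^ 2)
           (fun _ => / (1 - Rabs al) * Series (fun k => Rabs al ^ k * x k ^ 2))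
           (geom_conv al d f n ^ 2) (/ (1 - Rabs al) * Series (fun k => Rabs al ^ k * x k ^ 2))).
  - intros m. rewrite sum_n_fsum.
    eapply Rle_trans; [apply fsum_cauchy_schwarz|].
    rewrite (fsum_ext (fun k => Rabs (al ^ k)) (fun k => Rabs al ^ k))
      by (intros; symmetry; apply RPow_abs).
    rewrite (fsum_ext (fun k => Rabs (al ^ k) * x k ^ 2) (fun k => Rabs al ^ k * x k ^ 2))
      by (intros; rewrite RPow_abs; reflexivity).
    apply Rmult_le_compat; try (apply fsum_nonneg; assumption).
    + rewrite <- Hmass. apply fsum_le_Series; [exact Hw | exact ex_series_geom_abs].
    + apply fsum_le_Series; [exact Hwx | exact Ex].
  - pose proof (Series_correct _ (ex_series_geom_conv f n Hf)) as Hlim.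
    apply (is_lim_seq_ext (fun m => sum_n (fun k => al ^ k * x k) m * sum_n (fun k => al ^ k * x k) m));
      [intros; ring|].
    replace (geom_conv al d f n ^ 2) with (geom_conv al d f n * geom_conv al d f n) by ring.
    apply is_lim_seq_mult'; exact Hlim.
  - apply is_lim_seq_const.
Qed.

Lemma l2_geom_conv f : l2 f ->
  l2 (geom_conv al d f) /\ sqnorm (geom_conv al d f) <= (/ (1 - Rabs al)) ^ 2 * sqnorm f.
Proof.
  intros Hf. apply l2_of_window_bound. intros a L.
  set (w := / (1 - Rabs al)).
  assert (Hw : 0 < w) by (apply Rinv_0_lt_compat; lra).
  assert (Hb := bounded_of_l2 f Hf).
  set (F := fun (i k : nat) => Rabs al ^ k * f (a + Z.of_nat i + d * Z.of_nat k)%Z ^ 2).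
  apply Rle_trans with (w * Series (fun k => fsum (fun i => F i k) L)).
  { rewrite (is_series_unique _ _ (is_series_fsum F L (fun i => proj1 (sq_geom_conv_le f _ Hb)))).
    unfold window. rewrite <- fsum_scal_l. apply fsum_le. intros i.
    exact (proj2 (sq_geom_conv_le f (a + Z.of_nat i)%Z Hb)). }
  assert (Hwin : forall k, fsum (fun i => F i k) L
                        = Rabs al ^ k * window (fun n => f n ^ 2) (a + d * Z.of_nat k)%Z L).
  { intros k. unfold F, window. rewrite <- fsum_scal_l. apply fsum_ext; intros; do 3 f_equal; lia. }
  assert (Hle : Series (fun k => fsum (fun i => F i k) L) <= Series (fun k => sqnorm f * Rabs al ^ k)).
  { apply Series_le.
    - intros k. rewrite Hwin. pose proof (pow_le (Rabs al) k (Rabs_pos al)).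
      pose proof (window_le_sqnorm f Hf (a + d * Z.of_nat k)%Z L).
      assert (0 <= window (fun n => f n ^ 2) (a + d * Z.of_nat k)%Z L)
        by (apply fsum_nonneg; intros; apply pow2_ge_0).
      split; nra.
    - apply (ex_series_scal_l (sqnorm f) (fun k => Rabs al ^ k)), ex_series_geom_abs. }
  rewrite Series_scal_l, Series_geom in Hle by (rewrite Rabs_Rabsolu; exact Hal).
  fold w in Hle. pose proof (sqnorm_nonneg f Hf).
  apply Rle_trans with (w * (sqnorm f * w)); [apply Rmult_le_compat_l; lra | right; ring].
Qed.

End GeomConv.

Definition laurent (B p : R) (f : Z -> R) (n : Z) : R := B * f n + p * (f (n + 1)%Z + f (n - 1)%Z).

(* The symbol [B + p (z + 1/z)] of [laurent B p] factors as [c (1 - al z) (1 - al / z)]. *)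
Lemma laurent_factorization B p : 2 * Rabs p < B ->
  exists c al, 0 < c /\ Rabs al < 1 /\ c * (1 + al ^ 2) = B /\ - (c * al) = p.
Proof.
  intros HB. pose proof (Rabs_pos p) as Hp0.
  assert (Hp2 : Rabs p ^ 2 = p ^ 2) by (unfold Rabs; destruct Rcase_abs; ring).
  set (D := B ^ 2 - 4 * p ^ 2).
  assert (HD : 0 < D) by (unfold D; nra).
  assert (Hs : sqrt D * sqrt D = D) by (apply sqrt_sqrt; lra).
  assert (Hs0 : 0 < sqrt D) by (apply sqrt_lt_R0; lra).
  set (c := (B + sqrt D) / 2).
  assert (Hc : Rabs p < c) by (unfold c; lra).
  assert (Hroot : c * c + p ^ 2 = B * c) by (unfold c, D in *; nra).
  exists c, (- p / c). repeat split.
  - lra.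
  - unfold Rdiv. rewrite Rabs_mult, Rabs_Ropp, Rabs_inv, (Rabs_pos_eq c) by lra.
    apply (Rmult_lt_reg_r c); [lra|]. field_simplify; lra.
  - apply (Rmult_eq_reg_r c); [|lra]. field_simplify; [nra | lra].
  - field. lra.
Qed.

(* [green c al f n = / (c (1 - al^2)) * sum_m al^|n - m| f m], the convolution
   with the Laurent coefficients of [1 / (c (1 - al z) (1 - al / z))]. *)
Definition green (c al : R) (f : Z -> R) (n : Z) : R :=
  / (c * (1 - al ^ 2)) * (geom_conv al (-1) f n + al * geom_conv al 1 f (n + 1)%Z).

Section Green.

Variables c al : R.
Hypotheses (Hc : c <> 0) (Hal : Rabs al < 1).

Lemma green_laurent f n : bounded_seq f -> laurent (c * (1 + al ^ 2)) (- (c * al)) (green c al f) n = f n.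
Proof.
  intros Hf.
  assert (Hal2 : 1 - al ^ 2 <> 0).
  { pose proof (Rabs_pos al). rewrite <- (pow2_abs al). nra. }
  unfold laurent, green.
  pose proof (geom_conv_step al (-1) Hal f n Hf) as L0.
  pose proof (geom_conv_step al (-1) Hal f (n + 1) Hf) as L1.
  pose proof (geom_conv_step al 1 Hal f n Hf) as R0.
  pose proof (geom_conv_step al 1 Hal f (n + 1) Hf) as R1.
  replace (n + 1 + -1)%Z with n in L1 by lia. replace (n + -1)%Z with (n - 1)%Z in L0 by lia.
  replace (n - 1 + 1)%Z with n by lia.
  rewrite L1, R0, L0, R1. field. auto.
Qed.

Lemma green_lincomb f g a b n : bounded_seq f -> bounded_seq g ->
  green c al (fun m => a * f m + b * g m) n = a * green c al f n + b * green c al g n.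
Proof.
  intros Hf Hg. unfold green. rewrite !(geom_conv_lincomb al _ Hal f g a b) by assumption. ring.
Qed.

Lemma green_shift f d n : green c al (fun m => f (m + d)%Z) n = green c al f (n + d)%Z.
Proof.
  unfold green. rewrite !geom_conv_shift. replace (n + 1 + d)%Z with (n + d + 1)%Z by lia. reflexivity.
Qed.

Lemma l2_green : exists K, 0 <= K /\
  forall f, l2 f -> l2 (green c al f) /\ sqnorm (green c al f) <= K * sqnorm f.
Proof.
  set (k := / (c * (1 - al ^ 2))). set (w := (/ (1 - Rabs al)) ^ 2).
  assert (Hw : 0 <= w) by apply pow2_ge_0.
  exists ((2 * k ^ 2 + 2 * (k * al) ^ 2) * w). split.
  { pose proof (pow2_ge_0 k); pose proof (pow2_ge_0 (k * al)). nra. }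
  intros f Hf.
  destruct (l2_geom_conv al (-1) Hal f Hf) as [L1 N1].
  destruct (l2_geom_conv al 1 Hal f Hf) as [L2 N2].
  destruct (l2_shift _ 1 L2) as [L3 N3].
  destruct (l2_lincomb _ _ k (k * al) L1 L3) as [L4 N4].
  replace (green c al f) with (fun n => k * geom_conv al (-1) f n + k * al * geom_conv al 1 f (n + 1)%Z)
    by (extensionality n; unfold green, k; ring).
  split; [exact L4|]. eapply Rle_trans; [exact N4|]. fold w in N1, N2.
  pose proof (pow2_ge_0 k); pose proof (pow2_ge_0 (k * al)).
  assert (2 * k ^ 2 * sqnorm (geom_conv al (-1) f) <= 2 * k ^ 2 * (w * sqnorm f))
    by (apply Rmult_le_compat_l; lra).
  assert (2 * (k * al) ^ 2 * sqnorm (fun n => geom_conv al 1 f (n + 1)%Z)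
          <= 2 * (k * al) ^ 2 * (w * sqnorm f))
    by (apply Rmult_le_compat_l; lra).
  lra.
Qed.

End Green.

(** * The bulk resolvent *)

(* [hop s t (-1)] and [hop s t 1] are the two off-diagonal blocks of the bulk
   SSH Hamiltonian on real sequences: sublattice b to a, and a to b. *)
Definition hop (s t : R) (d : Z) (y : Z -> R) (n : Z) : R := t * y (n + d)%Z + s * y n.

Lemma bounded_hop s t d y : bounded_seq y -> bounded_seq (hop s t d y).
Proof.
  intros [M HM]. exists (Rabs t * M + Rabs s * M). intros n. unfold hop.
  eapply Rle_trans; [apply Rabs_triang|]. rewrite !Rabs_mult.
  apply Rplus_le_compat; apply Rmult_le_compat_l; auto using Rabs_pos.
Qed.

Lemma l2_hop s t d y : l2 y -> l2 (hop s t d y) /\ sqnorm (hop s t d y) <= 2 * (s ^ 2 + t ^ 2) * sqnorm y.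
Proof.
  intros Hy. destruct (l2_shift y d Hy) as [Ls Ns].
  destruct (l2_lincomb _ _ t s Ls Hy) as [L N]. split; [exact L|].
  eapply Rle_trans; [exact N|].
  pose proof (pow2_ge_0 t). pose proof (pow2_ge_0 s). pose proof (sqnorm_nonneg y Hy).
  assert (2 * t ^ 2 * sqnorm (fun n => y (n + d)%Z) <= 2 * t ^ 2 * sqnorm y)
    by (apply Rmult_le_compat_l; lra).
  lra.
Qed.

Lemma green_hop c al s t d y n : Rabs al < 1 -> bounded_seq y ->
  green c al (hop s t d y) n = hop s t d (green c al y) n.
Proof.
  intros Hal [M HM]. unfold hop at 1.
  rewrite (green_lincomb c al Hal (fun m => y (m + d)%Z) y t s n);
    [| exists M; intros; apply HM | exists M; exact HM].
  rewrite green_shift. reflexivity.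
Qed.

(* The off-diagonal form of [(H - e) (H + e) = H^2 - e^2], where [H^2] acts on
   each sublattice as the Laurent operator [laurent (s^2 + t^2) (s t)]. *)
Lemma hop_factorization s t d e u v w n : Z.abs d = 1%Z ->
  (forall m, w m = hop s t (- d) u m + e * v m) ->
  hop s t d w n - e * (hop s t d v n + e * u n) = laurent (s ^ 2 + t ^ 2 - e ^ 2) (s * t) u n.
Proof.
  intros Hd Hw. unfold hop at 1. rewrite !Hw. unfold hop, laurent.
  assert (Hd' : d = 1%Z \/ d = (-1)%Z) by lia.
  destruct Hd' as [-> | ->]; simpl Z.opp;
    try replace (n + 1 + -1)%Z with n by lia; try replace (n + -1 + 1)%Z with n by lia;
    replace (n + -1)%Z with (n - 1)%Z by lia; ring.
Qed.

(* On real sequences, [H - lam] maps the sublattice pair [(x, y)] to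
   [(bulk_comp (-1) x y, bulk_comp 1 y x)]; the resolvent is [(H + lam) (H^2 - lam^2)^-1],
   with components [(resolvent_comp (-1) x y, resolvent_comp 1 y x)]. *)
Definition bulk_comp (s t lam : R) (d : Z) (x y : Z -> R) (n : Z) : R := hop s t d y n - lam * x n.

Definition resolvent_comp (s t lam c al : R) (d : Z) (x y : Z -> R) (n : Z) : R :=
  hop s t d (green c al y) n + lam * green c al x n.

Section RealResolvent.

Variables s t lam c al : R.
Hypotheses (Hc : c <> 0) (Hal : Rabs al < 1)
  (HB : c * (1 + al ^ 2) = s ^ 2 + t ^ 2 - lam ^ 2) (Hp : - (c * al) = s * t).

Lemma laurent_green f n : bounded_seq f -> laurent (s ^ 2 + t ^ 2 - lam ^ 2) (s * t) (green c al f) n = f n.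
Proof. rewrite <- HB, <- Hp. apply green_laurent; assumption. Qed.

Lemma green_bulk_comp d x y : bounded_seq x -> bounded_seq y ->
  green c al (bulk_comp s t lam d x y) = bulk_comp s t lam d (green c al x) (green c al y).
Proof.
  intros Hx Hy. extensionality n.
  replace (bulk_comp s t lam d x y) with (fun m => 1 * hop s t d y m + (- lam) * x m)
    by (extensionality m; unfold bulk_comp; ring).
  rewrite green_lincomb by (auto using bounded_hop).
  unfold bulk_comp. rewrite green_hop by assumption. ring.
Qed.

Lemma bulk_comp_resolvent_comp d x y n : Z.abs d = 1%Z -> bounded_seq x ->
  bulk_comp s t lam d (resolvent_comp s t lam c al d x y) (resolvent_comp s t lam c al (- d) y x) n = x n.
Proof.
  intros Hd Hx. rewrite <- (laurent_green x n Hx).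
  rewrite <- (hop_factorization s t d lam _ (green c al y) _ n Hd (fun m => eq_refl)).
  reflexivity.
Qed.

Lemma resolvent_comp_bulk_comp d x y n : Z.abs d = 1%Z -> bounded_seq x -> bounded_seq y ->
  resolvent_comp s t lam c al d (bulk_comp s t lam d x y) (bulk_comp s t lam (- d) y x) n = x n.
Proof.
  intros Hd Hx Hy. unfold resolvent_comp.
  rewrite !green_bulk_comp by assumption.
  rewrite <- (laurent_green x n Hx).
  replace (lam ^ 2) with ((- lam) ^ 2) by ring.
  rewrite <- (hop_factorization s t d (- lam) _ (green c al y)
                (bulk_comp s t lam (- d) (green c al y) (green c al x)) n Hd)
    by (intros m; unfold bulk_comp; ring).
  unfold bulk_comp. ring.
Qed.

Lemma l2_resolvent_comp : exists K, forall d x y, l2 x -> l2 y ->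
  l2 (resolvent_comp s t lam c al d x y) /\
  sqnorm (resolvent_comp s t lam c al d x y) <= K * (sqnorm x + sqnorm y).
Proof.
  destruct (l2_green c al Hal) as [Kg [HKg HG]].
  exists ((4 * (s ^ 2 + t ^ 2) + 2 * lam ^ 2) * Kg). intros d x y Hx Hy.
  destruct (HG x Hx) as [Lx Nx]. destruct (HG y Hy) as [Ly Ny].
  destruct (l2_hop s t d _ Ly) as [Lh Nh].
  destruct (l2_lincomb _ _ 1 lam Lh Lx) as [L N].
  replace (resolvent_comp s t lam c al d x y)
    with (fun n => 1 * hop s t d (green c al y) n + lam * green c al x n)
    by (extensionality n; unfold resolvent_comp; ring).
  split; [exact L|]. eapply Rle_trans; [exact N|].
  pose proof (sqnorm_nonneg x Hx). pose proof (sqnorm_nonneg y Hy).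
  pose proof (sqnorm_nonneg _ Ly).
  pose proof (pow2_ge_0 s). pose proof (pow2_ge_0 t). pose proof (pow2_ge_0 lam).
  assert (sqnorm (hop s t d (green c al y)) <= 2 * (s ^ 2 + t ^ 2) * (Kg * sqnorm y)).
  { eapply Rle_trans; [exact Nh|]. apply Rmult_le_compat_l; lra. }
  assert (lam ^ 2 * sqnorm (green c al x) <= lam ^ 2 * (Kg * sqnorm x)) by (apply Rmult_le_compat_l; lra).
  assert (0 <= (s ^ 2 + t ^ 2) * (Kg * sqnorm x)) by (apply Rmult_le_pos; [lra | apply Rmult_le_pos; lra]).
  assert (0 <= lam ^ 2 * (Kg * sqnorm y)) by (apply Rmult_le_pos; [lra | apply Rmult_le_pos; lra]).
  nra.
Qed.

End RealResolvent.

Definition re_a (p : Z -> C2) (n : Z) : R := Re (fst (p n)).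
Definition im_a (p : Z -> C2) (n : Z) : R := Im (fst (p n)).
Definition re_b (p : Z -> C2) (n : Z) : R := Re (snd (p n)).
Definition im_b (p : Z -> C2) (n : Z) : R := Im (snd (p n)).
Definition of_parts (xr xi yr yi : Z -> R) : Z -> C2 := fun n => ((xr n, xi n), (yr n, yi n)).

Lemma of_parts_eta p : of_parts (re_a p) (im_a p) (re_b p) (im_b p) = p.
Proof.
  extensionality n. unfold of_parts, re_a, im_a, re_b, im_b, Re, Im.
  destruct (p n) as [[? ?] [? ?]]; reflexivity.
Qed.

Lemma C2norm2_parts (x : C2) :
  C2norm2 x = Re (fst x) ^ 2 + Im (fst x) ^ 2 + (Re (snd x) ^ 2 + Im (snd x) ^ 2).
Proof. unfold C2norm2. rewrite !Cmod2_alt. reflexivity. Qed.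

Lemma l2_of_le_C2norm2 (f : Z -> R) (p : Z -> C2) :
  is_l2_Z p -> (forall n, f n ^ 2 <= C2norm2 (p n)) -> l2 f.
Proof.
  intros [H1 H2] Hf.
  split; [apply (ex_series_nonneg_le _ _ (fun k => conj (pow2_ge_0 _) (Hf _)) H1)
         | apply (ex_series_nonneg_le _ _ (fun k => conj (pow2_ge_0 _) (Hf _)) H2)].
Qed.

Lemma l2_parts p : is_l2_Z p -> l2 (re_a p) /\ l2 (im_a p) /\ l2 (re_b p) /\ l2 (im_b p).
Proof.
  intros Hp.
  repeat split; apply (l2_of_le_C2norm2 _ p Hp); intros n; rewrite C2norm2_parts;
    unfold re_a, im_a, re_b, im_b;
    pose proof (pow2_ge_0 (Re (fst (p n)))); pose proof (pow2_ge_0 (Im (fst (p n))));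
    pose proof (pow2_ge_0 (Re (snd (p n)))); pose proof (pow2_ge_0 (Im (snd (p n)))); lra.
Qed.

Lemma is_series_sum4 (a b c d : nat -> R) : ex_series a -> ex_series b -> ex_series c -> ex_series d ->
  is_series (fun k => a k + b k + (c k + d k)) (Series a + Series b + (Series c + Series d)).
Proof.
  intros Ha Hb Hc Hd.
  apply (is_series_plus (fun k => a k + b k) (fun k => c k + d k));
    [apply (is_series_plus a b) | apply (is_series_plus c d)]; apply Series_correct; assumption.
Qed.

Lemma is_l2_Z_of_parts xr xi yr yi : l2 xr -> l2 xi -> l2 yr -> l2 yi ->
  is_l2_Z (of_parts xr xi yr yi) /\
  norm2_Z (of_parts xr xi yr yi) = sqnorm xr + sqnorm xi + sqnorm yr + sqnorm yi.
Proof.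
  intros [A1 A1'] [A2 A2'] [B1 B1'] [B2 B2'].
  assert (E : forall n, C2norm2 (of_parts xr xi yr yi n) = xr n ^ 2 + xi n ^ 2 + (yr n ^ 2 + yi n ^ 2))
    by (intros; apply C2norm2_parts).
  pose proof (is_series_ext _ (fun k => C2norm2 (of_parts xr xi yr yi (Z.of_nat k))) _
                (fun k => eq_sym (E _)) (is_series_sum4 _ _ _ _ A1 A2 B1 B2)) as S1.
  pose proof (is_series_ext _ (fun k => C2norm2 (of_parts xr xi yr yi (- Z.of_nat (S k))%Z)) _
                (fun k => eq_sym (E _)) (is_series_sum4 _ _ _ _ A1' A2' B1' B2')) as S2.
  split; [split; eexists; eassumption|].
  unfold norm2_Z, sqnorm. rewrite (is_series_unique _ _ S1), (is_series_unique _ _ S2). ring.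
Qed.

Lemma H_bulk_minus_parts s t lam p :
  (fun n => C2add (H_bulk (A_SSH t) (V_SSH s) p n) (C2scal (Copp (RtoC lam)) (p n))) =
  of_parts (bulk_comp s t lam (-1) (re_a p) (re_b p)) (bulk_comp s t lam (-1) (im_a p) (im_b p))
           (bulk_comp s t lam 1 (re_b p) (re_a p)) (bulk_comp s t lam 1 (im_b p) (im_a p)).
Proof.
  extensionality n.
  unfold H_bulk, of_parts, bulk_comp, hop, re_a, im_a, re_b, im_b,
    C2add, C2scal, mv, madj, A_SSH, V_SSH, rscal, sigma1.
  replace (n + -1)%Z with (n - 1)%Z by lia.
  destruct (p (n - 1)%Z) as [[? ?] [? ?]], (p (n + 1)%Z) as [[? ?] [? ?]], (p n) as [[? ?] [? ?]].
  unfold Re, Im, Cplus, Cmult, Copp, Cconj, RtoC; simpl. f_equal; f_equal; ring.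
Qed.

Definition bulk_resolvent (s t lam c al : R) (phi : Z -> C2) : Z -> C2 :=
  of_parts (resolvent_comp s t lam c al (-1) (re_a phi) (re_b phi))
           (resolvent_comp s t lam c al (-1) (im_a phi) (im_b phi))
           (resolvent_comp s t lam c al 1 (re_b phi) (re_a phi))
           (resolvent_comp s t lam c al 1 (im_b phi) (im_a phi)).

Lemma gap_condition s t lam : Rabs lam < Rabs (Rabs s - Rabs t) ->
  2 * Rabs (s * t) < s ^ 2 + t ^ 2 - lam ^ 2.
Proof.
  intros Hl.
  assert (lam ^ 2 < (Rabs s - Rabs t) ^ 2).
  { rewrite <- (pow2_abs lam), <- (pow2_abs (Rabs s - Rabs t)). pose proof (Rabs_pos lam). nra. }
  rewrite Rabs_mult, <- (pow2_abs s), <- (pow2_abs t). nra.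
Qed.

Section ComplexResolvent.

Variables s t lam c al : R.
Hypotheses (Hc : c <> 0) (Hal : Rabs al < 1)
  (HB : c * (1 + al ^ 2) = s ^ 2 + t ^ 2 - lam ^ 2) (Hp : - (c * al) = s * t).

Lemma bulk_minus_bulk_resolvent phi : is_l2_Z phi ->
  (fun n => C2add (H_bulk (A_SSH t) (V_SSH s) (bulk_resolvent s t lam c al phi) n)
                  (C2scal (Copp (RtoC lam)) (bulk_resolvent s t lam c al phi n))) = phi.
Proof.
  intros Hphi. destruct (l2_parts phi Hphi) as (L1 & L2 & L3 & L4).
  rewrite H_bulk_minus_parts.
  transitivity (of_parts (re_a phi) (im_a phi) (re_b phi) (im_b phi)); [|apply of_parts_eta].
  f_equal; extensionality n; apply bulk_comp_resolvent_comp; auto using bounded_of_l2.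
Qed.

Lemma bulk_resolvent_bulk_minus psi : is_l2_Z psi ->
  bulk_resolvent s t lam c al
    (fun n => C2add (H_bulk (A_SSH t) (V_SSH s) psi n) (C2scal (Copp (RtoC lam)) (psi n))) = psi.
Proof.
  intros Hpsi. destruct (l2_parts psi Hpsi) as (L1 & L2 & L3 & L4).
  rewrite H_bulk_minus_parts.
  transitivity (of_parts (re_a psi) (im_a psi) (re_b psi) (im_b psi)); [|apply of_parts_eta].
  unfold bulk_resolvent.
  f_equal; extensionality n; apply resolvent_comp_bulk_comp; auto using bounded_of_l2.
Qed.

Lemma l2_bulk_resolvent : exists K, forall phi, is_l2_Z phi ->
  is_l2_Z (bulk_resolvent s t lam c al phi) /\
  norm2_Z (bulk_resolvent s t lam c al phi) <= K * norm2_Z phi.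
Proof.
  destruct (l2_resolvent_comp s t lam c al Hal) as [K HK].
  exists (2 * K). intros phi Hphi. destruct (l2_parts phi Hphi) as (L1 & L2 & L3 & L4).
  destruct (HK (-1)%Z _ _ L1 L3) as [M1 N1]. destruct (HK (-1)%Z _ _ L2 L4) as [M2 N2].
  destruct (HK 1%Z _ _ L3 L1) as [M3 N3]. destruct (HK 1%Z _ _ L4 L2) as [M4 N4].
  destruct (is_l2_Z_of_parts _ _ _ _ M1 M2 M3 M4) as [HG EG].
  split; [exact HG|]. unfold bulk_resolvent. rewrite EG.
  pose proof (proj2 (is_l2_Z_of_parts _ _ _ _ L1 L2 L3 L4)) as Ephi. rewrite of_parts_eta in Ephi.
  rewrite Ephi. lra.
Qed.

End ComplexResolvent.

Lemma H_bulk_resolvent s t lam : Rabs lam < Rabs (Rabs s - Rabs t) ->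
  in_resolvent_Z (H_bulk (A_SSH t) (V_SSH s)) (RtoC lam).
Proof.
  intros Hl.
  destruct (laurent_factorization _ _ (gap_condition s t lam Hl)) as (c & al & Hc & Hal & HB & Hp).
  assert (Hc' : c <> 0) by lra.
  destruct (l2_bulk_resolvent s t lam c al Hal) as [K HK].
  exists (bulk_resolvent s t lam c al). split; [|split; [|split]].
  - intros phi Hphi. exact (proj1 (HK phi Hphi)).
  - apply bulk_minus_bulk_resolvent; assumption.
  - apply bulk_resolvent_bulk_minus; assumption.
  - exists K. intros phi Hphi. exact (proj2 (HK phi Hphi)).
Qed.

(** * Zero modes of the interface Hamiltonian *)

Lemma St_ext x y : (forall k, psiL x k = psiL y k) -> psi0 x = psi0 y ->
  (forall k, psiR x k = psiR y k) -> x = y.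
Proof.
  destruct x, y; simpl; intros; f_equal; auto; apply functional_extensionality; auto.
Qed.

Lemma St_add_zero_l x : St_add St_zero x = x.
Proof.
  apply St_ext; intros; simpl; [| ring |];
    unfold C2add, C2zero; simpl; rewrite !Cplus_0_l; symmetry; apply surjective_pairing.
Qed.

Lemma Cconj_R (x : R) : Cconj x = x.
Proof. unfold Cconj, RtoC; simpl. f_equal; ring. Qed.

Ltac expand_H_SSH :=
  unfold H_SSH, H_int, C2add, mv, madj, A_SSH, V_SSH, rscal, sigma1, row_adj_act, row_act;
  cbn [psiL psi0 psiR m11 m12 m21 m22 fst snd]; rewrite ?Cconj_R; first [ring | f_equal; ring].

Lemma H_SSH_psiL_0 s t uL uR psi : psiL (H_SSH s t uL uR psi) 0 =
  ((t * snd (psiL psi 1) + s * snd (psiL psi 0))%C, (s * fst (psiL psi 0) + uL * psi0 psi)%C).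
Proof. expand_H_SSH. Qed.

Lemma H_SSH_psiL_S s t uL uR psi k : psiL (H_SSH s t uL uR psi) (S k) =
  ((t * snd (psiL psi (S (S k))) + s * snd (psiL psi (S k)))%C,
   (s * fst (psiL psi (S k)) + t * fst (psiL psi k))%C).
Proof. expand_H_SSH. Qed.

Lemma H_SSH_psi0 s t uL uR psi :
  psi0 (H_SSH s t uL uR psi) = (uL * snd (psiL psi 0) + uR * fst (psiR psi 0))%C.
Proof. expand_H_SSH. Qed.

Lemma H_SSH_psiR_0 s t uL uR psi : psiR (H_SSH s t uL uR psi) 0 =
  ((s * snd (psiR psi 0) + uR * psi0 psi)%C, (t * fst (psiR psi 1) + s * fst (psiR psi 0))%C).
Proof. expand_H_SSH. Qed.

Lemma H_SSH_psiR_S s t uL uR psi k : psiR (H_SSH s t uL uR psi) (S k) =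
  ((s * snd (psiR psi (S k)) + t * snd (psiR psi k))%C,
   (t * fst (psiR psi (S (S k))) + s * fst (psiR psi (S k)))%C).
Proof. expand_H_SSH. Qed.

(* [a] and [b] are the first and second sublattice components, [L] and [R] the half-lines
   [n < 0] and [n > 0]. *)
Record zero_mode_eqs (s t uL uR : R) (psi : St) : Prop := {
  zm_bL : forall k, (t * snd (psiL psi (S k)) + s * snd (psiL psi k))%C = 0;
  zm_aL : forall k, (s * fst (psiL psi (S k)) + t * fst (psiL psi k))%C = 0;
  zm_aL_0 : (s * fst (psiL psi 0) + uL * psi0 psi)%C = 0;
  zm_center : (uL * snd (psiL psi 0) + uR * fst (psiR psi 0))%C = 0;
  zm_bR_0 : (s * snd (psiR psi 0) + uR * psi0 psi)%C = 0;
  zm_aR : forall k, (t * fst (psiR psi (S k)) + s * fst (psiR psi k))%C = 0;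
  zm_bR : forall k, (s * snd (psiR psi (S k)) + t * snd (psiR psi k))%C = 0 }.

Lemma H_SSH_eq_zero_iff s t uL uR psi : H_SSH s t uL uR psi = St_zero <-> zero_mode_eqs s t uL uR psi.
Proof.
  split.
  - intros E.
    assert (EL : forall k, psiL (H_SSH s t uL uR psi) k = C2zero) by (intros; rewrite E; reflexivity).
    assert (ER : forall k, psiR (H_SSH s t uL uR psi) k = C2zero) by (intros; rewrite E; reflexivity).
    assert (E0 : psi0 (H_SSH s t uL uR psi) = 0) by (rewrite E; reflexivity).
    pose proof (EL 0%nat) as L0. rewrite H_SSH_psiL_0 in L0. apply pair_equal_spec in L0 as [L0b L0a].
    pose proof (ER 0%nat) as R0. rewrite H_SSH_psiR_0 in R0. apply pair_equal_spec in R0 as [R0b R0a].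
    rewrite H_SSH_psi0 in E0.
    constructor; [intros [|k] | intros k | exact L0a | exact E0 | exact R0b | intros [|k] | intros k];
      try assumption;
      first [ pose proof (EL (S k)) as X; rewrite H_SSH_psiL_S in X;
              apply pair_equal_spec in X as [Xb Xa]; assumption
            | pose proof (ER (S k)) as X; rewrite H_SSH_psiR_S in X;
              apply pair_equal_spec in X as [Xb Xa]; assumption ].
  - intros [HbL HaL HaL0 Hc HbR0 HaR HbR]. apply St_ext.
    + intros [|k]; [rewrite H_SSH_psiL_0 | rewrite H_SSH_psiL_S]; simpl; unfold C2zero; f_equal; auto.
    + rewrite H_SSH_psi0; exact Hc.
    + intros [|k]; [rewrite H_SSH_psiR_0 | rewrite H_SSH_psiR_S]; simpl; unfold C2zero; f_equal; auto.
Qed.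

Lemma RtoC_neq_0 (p : R) : p <> 0 -> RtoC p <> 0.
Proof. intros Hp E. apply Hp, RtoC_inj, E. Qed.

Lemma Cmult_R_cancel (p : R) (z : C) : p <> 0 -> (p * z)%C = 0 -> z = 0.
Proof.
  intros Hp E. pose proof (RtoC_neq_0 p Hp).
  transitivity (/ p * (p * z))%C; [field; assumption | rewrite E; ring].
Qed.

Lemma solve_linear (p q : R) (x y : C) : p <> 0 -> (p * y + q * x)%C = 0 -> y = (RtoC (- q / p) * x)%C.
Proof.
  intros Hp E. pose proof (RtoC_neq_0 p Hp).
  assert (E' : (p * y)%C = (- (q * x))%C) by (rewrite <- (Cplus_0_l (- _)), <- E; ring).
  rewrite RtoC_div, RtoC_opp by assumption.
  transitivity (/ p * (p * y))%C; [field; assumption|]. rewrite E'. field. assumption.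
Qed.

Lemma geometric_of_recursion (p q : R) (z : nat -> C) : p <> 0 ->
  (forall k, (p * z (S k) + q * z k)%C = 0) -> forall k, z k = (z O * RtoC ((- q / p) ^ k))%C.
Proof.
  intros Hp Hz k. induction k as [|k IH]; [simpl; ring|].
  rewrite (solve_linear p q (z k) (z (S k)) Hp (Hz k)), IH. simpl pow. rewrite RtoC_mult. ring.
Qed.

Lemma recursion_of_geometric (p q : R) (x : C) k : p <> 0 ->
  (p * (x * RtoC ((- q / p) ^ S k)) + q * (x * RtoC ((- q / p) ^ k)))%C = 0.
Proof.
  intros Hp. simpl pow. rewrite RtoC_mult.
  transitivity (x * RtoC ((- q / p) ^ k) * RtoC (p * (- q / p) + q))%C;
    [rewrite RtoC_plus, RtoC_mult; ring|].
  replace (p * (- q / p) + q) with 0 by (field; assumption). ring.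
Qed.

(* [|z_k|] is nondecreasing, while the terms of a convergent series tend to 0. *)
Lemma vanish_of_recursion (p q : R) (z : nat -> C) : Rabs q <= Rabs p -> p <> 0 ->
  (forall k, (q * z (S k) + p * z k)%C = 0) -> ex_series (fun k => Cmod (z k) ^ 2) -> forall k, z k = 0.
Proof.
  intros Hqp Hp Hz Hl j.
  assert (Hmono : forall k, Cmod (z k) <= Cmod (z (S k))).
  { intros k. assert (E : (p * z k)%C = (- (q * z (S k)))%C).
    { rewrite <- (Cplus_0_l (- _)), <- (Hz k). ring. }
    assert (E' : Rabs p * Cmod (z k) = Rabs q * Cmod (z (S k))).
    { rewrite <- !Cmod_R, <- !Cmod_mult, E, Cmod_opp. reflexivity. }
    pose proof (Cmod_ge_0 (z (S k))). pose proof (Rabs_pos_lt p Hp).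
    apply (Rmult_le_reg_l (Rabs p)); [assumption|]. rewrite E'. apply Rmult_le_compat_r; assumption. }
  assert (Hgrow : forall m, Cmod (z j) ^ 2 <= Cmod (z (m + j)%nat) ^ 2).
  { intros m; induction m as [|m IH]; simpl; [lra|].
    pose proof (Hmono (m + j)%nat). pose proof (Cmod_ge_0 (z j)).
    pose proof (Cmod_ge_0 (z (m + j)%nat)). nra. }
  assert (Hlim := proj1 (is_lim_seq_incr_n _ j 0) (ex_series_lim_0 _ Hl)).
  assert (H0 := is_lim_seq_le (fun _ => Cmod (z j) ^ 2) _ _ _ Hgrow (is_lim_seq_const _) Hlim).
  simpl in H0. apply Cmod_eq_0. pose proof (Cmod_ge_0 (z j)). nra.
Qed.

Lemma ex_series_Cmod_fst (f : nat -> C2) : is_l2_nat f -> ex_series (fun k => Cmod (fst (f k)) ^ 2).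
Proof.
  apply ex_series_nonneg_le. intros k. unfold C2norm2.
  pose proof (pow2_ge_0 (Cmod (fst (f k)))); pose proof (pow2_ge_0 (Cmod (snd (f k)))); lra.
Qed.

Lemma ex_series_Cmod_snd (f : nat -> C2) : is_l2_nat f -> ex_series (fun k => Cmod (snd (f k)) ^ 2).
Proof.
  apply ex_series_nonneg_le. intros k. unfold C2norm2.
  pose proof (pow2_ge_0 (Cmod (fst (f k)))); pose proof (pow2_ge_0 (Cmod (snd (f k)))); lra.
Qed.

Definition geom_state (r : R) (aL bL c aR bR : C) : St :=
  mkSt (fun k => ((aL * RtoC (r ^ k))%C, (bL * RtoC (r ^ k))%C)) c
       (fun k => ((aR * RtoC (r ^ k))%C, (bR * RtoC (r ^ k))%C)).

Lemma geom_state_scal z r aL bL c aR bR :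
  St_scal z (geom_state r aL bL c aR bR) = geom_state r (z * aL) (z * bL) (z * c) (z * aR) (z * bR).
Proof. apply St_ext; intros; simpl; unfold C2scal; simpl; try f_equal; ring. Qed.

Lemma geom_state_eq_zero r aL bL c aR bR : geom_state r aL bL c aR bR = St_zero ->
  aL = 0 /\ bL = 0 /\ c = 0 /\ aR = 0 /\ bR = 0.
Proof.
  intros E.
  apply (f_equal (fun x => (psiL x 0%nat, psi0 x, psiR x 0%nat))) in E. simpl in E.
  rewrite !Cmult_1_r in E. inversion E. auto.
Qed.

Lemma St_eq_geom_state psi r aL bL aR bR :
  (forall k, fst (psiL psi k) = (aL * RtoC (r ^ k))%C) ->
  (forall k, snd (psiL psi k) = (bL * RtoC (r ^ k))%C) ->
  (forall k, fst (psiR psi k) = (aR * RtoC (r ^ k))%C) ->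
  (forall k, snd (psiR psi k) = (bR * RtoC (r ^ k))%C) ->
  psi = geom_state r aL bL (psi0 psi) aR bR.
Proof.
  intros HaL HbL HaR HbR. apply St_ext; intros; simpl; auto;
    rewrite (surjective_pairing (_ psi k)); f_equal; auto.
Qed.

Lemma in_Hint_geom_state r aL bL c aR bR : Rabs r < 1 -> in_Hint (geom_state r aL bL c aR bR).
Proof.
  intros Hr.
  assert (Hr2 : Rabs (r ^ 2) < 1) by (rewrite <- RPow_abs; pose proof (Rabs_pos r); nra).
  assert (Hgeom : forall a b : C, is_l2_nat (fun k => ((a * RtoC (r ^ k))%C, (b * RtoC (r ^ k))%C))).
  { intros a b. unfold is_l2_nat, C2norm2.
    apply (ex_series_ext (fun k => (Cmod a ^ 2 + Cmod b ^ 2) * (r ^ 2) ^ k)).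
    - intros k. simpl fst; simpl snd. rewrite !Cmod_mult, !Cmod_R, <- RPow_abs.
      rewrite <- pow_mult, Nat.mul_comm, pow_mult, <- (pow2_abs (r ^ k)), <- RPow_abs. simpl; ring.
    - apply (ex_series_scal_l _ (fun k => (r ^ 2) ^ k)), ex_series_geom, Hr2. }
  split; apply Hgeom.
Qed.

Lemma Rabs_ratio_lt_1 p q : Rabs q < Rabs p -> Rabs (- q / p) < 1.
Proof.
  intros H. assert (Hp : p <> 0) by (intros ->; rewrite Rabs_R0 in H; pose proof (Rabs_pos q); lra).
  unfold Rdiv. rewrite Rabs_mult, Rabs_Ropp, Rabs_inv.
  apply (Rmult_lt_reg_r (Rabs p)); [apply Rabs_pos_lt, Hp|]. field_simplify; [lra | apply Rabs_no_R0, Hp].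
Qed.

Lemma nonzero_of_Rabs_gt p q : Rabs q < Rabs p -> p <> 0.
Proof. intros H ->. rewrite Rabs_R0 in H. pose proof (Rabs_pos q). lra. Qed.

Section SmallT.

Variables s t uL uR : R.
Hypothesis Hts : Rabs t < Rabs s.

Definition zero_mode_small_t : St := geom_state (- t / s) (- uL / s) 0 1 0 (- uR / s).

Lemma in_ker_zero_mode_small_t : in_ker (H_SSH s t uL uR) zero_mode_small_t.
Proof.
  pose proof (nonzero_of_Rabs_gt s t Hts) as Hs.
  split; [apply in_Hint_geom_state, Rabs_ratio_lt_1, Hts|].
  apply H_SSH_eq_zero_iff. constructor; intros; simpl;
    try (apply recursion_of_geometric; exact Hs); try ring;
    field; apply RtoC_neq_0, Hs.
Qed.

Lemma ker_small_t psi : in_ker (H_SSH s t uL uR) psi -> psi = St_scal (psi0 psi) zero_mode_small_t.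
Proof.
  intros [[HlL HlR] Hk]. apply H_SSH_eq_zero_iff in Hk. destruct Hk as [HbL HaL HaL0 _ HbR0 HaR HbR].
  pose proof (nonzero_of_Rabs_gt s t Hts) as Hs.
  assert (Hle : Rabs t <= Rabs s) by lra.
  pose proof (geometric_of_recursion s t _ Hs HaL) as GaL.
  pose proof (geometric_of_recursion s t _ Hs HbR) as GbR.
  pose proof (vanish_of_recursion s t _ Hle Hs HbL (ex_series_Cmod_snd _ HlL)) as ZbL.
  pose proof (vanish_of_recursion s t _ Hle Hs HaR (ex_series_Cmod_fst _ HlR)) as ZaR.
  cbv beta in GaL, GbR, ZbL, ZaR.
  rewrite (solve_linear s uL _ _ Hs HaL0) in GaL. rewrite (solve_linear s uR _ _ Hs HbR0) in GbR.
  rewrite (St_eq_geom_state psi (- t / s) (RtoC (- uL / s) * psi0 psi) 0 0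
             (RtoC (- uR / s) * psi0 psi)) at 1;
    [| intros k; rewrite GaL; ring | intros k; rewrite ZbL; ring
     | intros k; rewrite ZaR; ring | intros k; rewrite GbR; ring].
  unfold zero_mode_small_t. rewrite geom_state_scal.
  f_equal; rewrite ?RtoC_div, ?RtoC_opp by assumption; field; apply RtoC_neq_0, Hs.
Qed.

End SmallT.

Section SmallS.

Variables s t uL uR : R.
Hypothesis Hst : Rabs s < Rabs t.

Lemma in_ker_small_s bL c aR : (uL * c)%C = 0 -> (uR * c)%C = 0 -> (uL * bL + uR * aR)%C = 0 ->
  in_ker (H_SSH s t uL uR) (geom_state (- s / t) 0 bL c aR 0).
Proof.
  intros HL HR Hc. pose proof (nonzero_of_Rabs_gt t s Hst) as Ht.
  split; [apply in_Hint_geom_state, Rabs_ratio_lt_1, Hst|].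
  apply H_SSH_eq_zero_iff. constructor; intros; simpl;
    try (apply recursion_of_geometric; exact Ht); rewrite ?Cmult_1_r; try ring;
    [rewrite HL | exact Hc | rewrite HR]; ring.
Qed.

Lemma ker_small_s psi : in_ker (H_SSH s t uL uR) psi ->
  psi = geom_state (- s / t) 0 (snd (psiL psi 0)) (psi0 psi) (fst (psiR psi 0)) 0 /\
  (uL * psi0 psi)%C = 0 /\ (uR * psi0 psi)%C = 0 /\
  (uL * snd (psiL psi 0) + uR * fst (psiR psi 0))%C = 0.
Proof.
  intros [[HlL HlR] Hk]. apply H_SSH_eq_zero_iff in Hk. destruct Hk as [HbL HaL HaL0 Hc HbR0 HaR HbR].
  pose proof (nonzero_of_Rabs_gt t s Hst) as Ht.
  assert (Hle : Rabs s <= Rabs t) by lra.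
  pose proof (geometric_of_recursion t s _ Ht HbL) as GbL.
  pose proof (geometric_of_recursion t s _ Ht HaR) as GaR.
  pose proof (vanish_of_recursion t s _ Hle Ht HaL (ex_series_Cmod_fst _ HlL)) as ZaL.
  pose proof (vanish_of_recursion t s _ Hle Ht HbR (ex_series_Cmod_snd _ HlR)) as ZbR.
  cbv beta in GbL, GaR, ZaL, ZbR.
  split; [|split; [|split]].
  - apply St_eq_geom_state; intros k; [rewrite ZaL | rewrite GbL | rewrite GaR | rewrite ZbR]; ring.
  - rewrite <- HaL0, ZaL. ring.
  - rewrite <- HbR0, ZbR. ring.
  - exact Hc.
Qed.

End SmallS.

Lemma ker_dim_one H v : in_ker H v -> (forall z, St_scal z v = St_zero -> z = 0) ->
  (forall psi, in_ker H psi -> exists z, psi = St_scal z v) -> ker_dim H 1.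
Proof.
  intros Hv Hinj Hspan. exists (fun _ => v). split; [|split].
  - intros; exact Hv.
  - intros c E i Hi. replace i with 0%nat by lia. apply Hinj.
    cbn [St_lincomb] in E. rewrite St_add_zero_l in E. exact E.
  - intros psi Hpsi. destruct (Hspan psi Hpsi) as [z ->]. exists (fun _ => z).
    cbn [St_lincomb]. rewrite St_add_zero_l. reflexivity.
Qed.

Lemma ker_dim_H_SSH_small_t s t uL uR : Rabs t < Rabs s -> ker_dim (H_SSH s t uL uR) 1.
Proof.
  intros Hts. apply (ker_dim_one _ (zero_mode_small_t s t uL uR)).
  - apply in_ker_zero_mode_small_t, Hts.
  - intros z E. unfold zero_mode_small_t in E. rewrite geom_state_scal in E.
    destruct (geom_state_eq_zero _ _ _ _ _ _ E) as (_ & _ & Hz & _). rewrite Cmult_1_r in Hz. exact Hz.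
  - intros psi Hpsi. exists (psi0 psi). apply ker_small_t; assumption.
Qed.

Lemma C_kernel_of_real_row (uL uR : R) (x y : C) : ~ (uL = 0 /\ uR = 0) ->
  (uL * x + uR * y)%C = 0 -> exists z, x = (z * - uR)%C /\ y = (z * uL)%C.
Proof.
  intros Hu E. destruct (Req_dec uL 0) as [-> | HL].
  - assert (HR : uR <> 0) by tauto. exists (- x / uR)%C. split.
    + field. apply RtoC_neq_0, HR.
    + rewrite Cmult_0_r. apply (Cmult_R_cancel uR _ HR). rewrite <- E. ring.
  - pose proof (RtoC_neq_0 uL HL). exists (y / uL)%C. split; [|field; assumption].
    transitivity ((uL * x + uR * y - uR * y) / uL)%C; [field; assumption|].
    rewrite E. field. assumption.
Qed.

Lemma ker_dim_H_SSH_small_s_coupled s t uL uR : Rabs s < Rabs t -> ~ (uL = 0 /\ uR = 0) ->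
  ker_dim (H_SSH s t uL uR) 1.
Proof.
  intros Hst Hu. apply (ker_dim_one _ (geom_state (- s / t) 0 (- uR) 0 uL 0)).
  - apply in_ker_small_s; [exact Hst | ring | ring | ring].
  - intros z E. rewrite geom_state_scal in E.
    destruct (geom_state_eq_zero _ _ _ _ _ _ E) as (_ & HbL & _ & HaR & _).
    destruct (Req_dec uL 0) as [HL | HL].
    + apply (Cmult_R_cancel uR); [tauto|]. transitivity (- (z * - uR))%C; [ring | rewrite HbL; ring].
    + apply (Cmult_R_cancel uL _ HL). rewrite <- HaR. ring.
  - intros psi Hpsi. destruct (ker_small_s s t uL uR Hst psi Hpsi) as (Hform & HL0 & HR0 & Hc).
    assert (H0 : psi0 psi = 0).
    { destruct (Req_dec uL 0) as [HL | HL];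
        [apply (Cmult_R_cancel uR); [tauto | exact HR0] | exact (Cmult_R_cancel uL _ HL HL0)]. }
    destruct (C_kernel_of_real_row uL uR _ _ Hu Hc) as (z & Hb & Ha).
    exists z. rewrite Hform at 1. rewrite geom_state_scal, H0, Hb, Ha. f_equal; ring.
Qed.

Definition decoupled_basis (r : R) (i : nat) : St :=
  match i with
  | O => geom_state r 0 1 0 0 0
  | 1%nat => geom_state r 0 0 1 0 0
  | _ => geom_state r 0 0 0 1 0
  end.

Lemma St_lincomb_decoupled_basis r c :
  St_lincomb 3 c (decoupled_basis r) = geom_state r 0 (c 0%nat) (c 1%nat) (c 2%nat) 0.
Proof. apply St_ext; intros; cbn; unfold C2add, C2scal; cbn; try f_equal; ring. Qed.

Lemma ker_dim_H_SSH_small_s_decoupled s t : Rabs s < Rabs t -> ker_dim (H_SSH s t 0 0) 3.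
Proof.
  intros Hst. exists (decoupled_basis (- s / t)). split; [|split].
  - intros [|[|i]] Hi; apply in_ker_small_s; auto; ring.
  - intros c E. rewrite St_lincomb_decoupled_basis in E.
    destruct (geom_state_eq_zero _ _ _ _ _ _ E) as (_ & H0 & H1 & H2 & _).
    intros [|[|[|i]]] Hi; auto; lia.
  - intros psi Hpsi. destruct (ker_small_s s t 0 0 Hst psi Hpsi) as [Hform _].
    exists (fun i => match i with O => snd (psiL psi 0) | 1%nat => psi0 psi | _ => fst (psiR psi 0) end).
    rewrite St_lincomb_decoupled_basis. exact Hform.
Qed.

Theorem mainTheorem8 (s t uL uR : R) (hst : Rabs s <> Rabs t) :
  spectral_gap_at_0 (H_bulk (A_SSH t) (V_SSH s)) /\
  exists d : nat, Nat.Odd d /\ ker_dim (H_SSH s t uL uR) d.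
Proof.
  split.
  - exists (Rabs (Rabs s - Rabs t)). split; [apply Rabs_pos_lt; lra|].
    intros lam Hlam Hspec. exact (Hspec (H_bulk_resolvent s t lam Hlam)).
  - destruct (Rlt_or_le (Rabs t) (Rabs s)) as [Hts | Hst].
    + exists 1%nat. split; [exists 0%nat; reflexivity | apply ker_dim_H_SSH_small_t, Hts].
    + assert (Hst' : Rabs s < Rabs t) by lra.
      assert (Hu : (uL = 0 /\ uR = 0) \/ ~ (uL = 0 /\ uR = 0))
        by (destruct (Req_dec uL 0), (Req_dec uR 0); tauto).
      destruct Hu as [[-> ->] | Hu].
      * exists 3%nat. split; [exists 1%nat; reflexivity | apply ker_dim_H_SSH_small_s_decoupled, Hst'].
      * exists 1%nat. split; [exists 0%nat; reflexivity | apply ker_dim_H_SSH_small_s_coupled; assumption].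
Qed.
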